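(* Let $F$ be a Ferrers diagram and let $c\in\mathsf{Rec}^{\mathsf{min}}(G(F))$. Define the $0/1$-filling $T=\phi_{CT}(c)$ of $F$ by setting, for each cell in row $i\in\mathsf{rows}(F)$ and column $j\in\mathsf{cols}(F)$, $T_{ij}=0$ if $i$ topples after $j$ in $\mathsf{CanonTop}(c)$ and $T_{ij}=1$ if $i$ topples before $j$ in $\mathsf{CanonTop}(c)$. Then $\phi_{CT}$ is the inverse of the bijection $\phi_{TC}:\mathsf{EWtab}(F)\to\mathsf{Rec}^{\mathsf{min}}(G(F))$; in particular $T\in\mathsf{EWtab}(F)$ and $\phi_{TC}(T)=c$.
   Context: Ferrers diagrams and graphs: a Ferrers diagram $F$ (English convention) of semiperimeter $n+1$ has rows and columns labeled by $0,\ldots,n$: the $n+1$ unit steps of its south-east boundary path, traversed from top-right to bottom-left, are labeled $0,\ldots,n$; a vertical step labels the row it bounds, a horizontal step the column it bounds (top row labeled $0$). $\mathsf{rows}(F)$, $\mathsf{cols}(F)$ are the label sets; $F$ has a cell in row $i$, column $j$ iff $i<j$. $G(F)$ has vertex set $\{0,\ldots,n\}$ with edges $\{i,j\}$, $i\in\mathsf{rows}(F)$, $j\in\mathsf{cols}(F)$, $i<j$. Sandpile model with sink $0$: configurations $c\in\mathbb{N}^n$; non-sink $v$ unstable if $c_v\ge\deg(v)$; toppling sends one grain to each neighbour (grains to $0$ disappear); toppling the sink adds a grain to each neighbour of $0$. Recurrent: stable configurations obtainable from $c_v=\deg(v)-1$ by adding grains and stabilizing. $\mathsf{Rec}^{\mathsf{min}}(G)$: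 recurrent configurations of minimal total number of grains. Canonical toppling of a recurrent $c$: topple the sink ($U^{(0)}_c=\{0\}$), then alternately topple simultaneously all unstable vertices in $\mathsf{cols}(F)$ ($V^{(1)}_c$), all unstable in $\mathsf{rows}(F)$ ($U^{(1)}_c$), etc.; $\mathsf{CanonTop}(c)=(U^{(0)}_c,V^{(1)}_c,U^{(1)}_c,\ldots)$ is an ordered partition of $\{0,\ldots,n\}$, each vertex toppling exactly once; ''$a$ topples before $b$'' means the block of $a$ precedes the block of $b$. EW-tableaux: a $0/1$-filling $T$ of $F$ ($T_{ij}$ = entry in row $i$, column $j$) such that (1) the top row consists of 1s, (2) every other row contains at least one 0, (3) no four cells at the corners of a rectangle have 0s in two diagonally opposite corners and 1s in the other two. $\mathsf{EWtab}(F)$ is their set. The map $\phi_{TC}$ sends $T$ to the configuration $c$ with $c_i$ = number of 1s in row $i$ if $i\in\mathsf{rows}(F)$, and $c_i$ = number of 0s in column $i$ if $i\in\mathsf{cols}(F)$, $i\ne 0$; it is known to be a bijection $\mathsf{EWtab}(F)\to\mathsf{Rec}^{\mathsf{min}}(G(F))$. *)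

From Stdlib Require Import Relations.
From mathcomp Require Import all_boot.
From mathcomp Require Import boolp.
Set Implicit Arguments.
Unset Strict Implicit.
Unset Printing Implicit Defensive.

(* A Ferrers diagram of semiperimeter n+1 is encoded by the set R of labels
   of its rows, a subset of {0,...,n} = 'I_n.+1 ; the columns are the other
   labels.  The boundary path starts (top-right) with a vertical step and
   ends (bottom-left) with a horizontal step, i.e. 0 is a row label and n a
   column label. *)
Definition ferrers (n : nat) (R : {set 'I_n.+1}) : bool :=
  (ord0 \in R) && (ord_max \notin R).

Definition cell n (R : {set 'I_n.+1}) (i j : 'I_n.+1) : bool :=
  [&& i \in R, j \notin R & i < j].

Definition adj n (R : {set 'I_n.+1}) (u v : 'I_n.+1) : bool :=
  cell R u v || cell R v u.

Definition deg n (R : {set 'I_n.+1}) (v : 'I_n.+1) : nat :=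
  #|[set u | adj R v u]|.

(* Sandpile configurations: values on the non-sink vertices; the value at
   the sink 0 is kept equal to 0 by all the operations below. *)
Definition config n := {ffun 'I_n.+1 -> nat}.

Definition stable n (R : {set 'I_n.+1}) (c : config n) : Prop :=
  forall v, v != ord0 -> c v < deg R v.

Definition add_grain n (c : config n) (v : 'I_n.+1) : config n :=
  [ffun u => c u + (u == v)].

Definition topple n (R : {set 'I_n.+1}) (c : config n) (v : 'I_n.+1) : config n :=
  [ffun u => if u == ord0 then c u
             else if u == v then c u - deg R v else c u + adj R v u].

Definition topple_set n (R : {set 'I_n.+1}) (c : config n) (S : {set 'I_n.+1})
  : config n :=
  [ffun u => if u == ord0 then c u
             else (c u + #|[set w in S | adj R w u]|)
                  - (if u \in S then deg R u else 0)].

Definition topple_sink n (R : {set 'I_n.+1}) (c : config n) : config n :=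
  [ffun u => if u == ord0 then c u else c u + adj R ord0 u].

Definition sp_step n (R : {set 'I_n.+1}) (c c' : config n) : Prop :=
  (exists2 v, v != ord0 & c' = add_grain c v) \/
  (exists v, [/\ v != ord0, deg R v <= c v & c' = topple R c v]).

Definition cmax n (R : {set 'I_n.+1}) : config n :=
  [ffun v => if v == ord0 then 0 else (deg R v).-1].

Definition recurrent n (R : {set 'I_n.+1}) (c : config n) : Prop :=
  stable R c /\ clos_refl_trans _ (@sp_step n R) (cmax R) c.

Definition grains n (c : config n) : nat := \sum_v c v.

Definition rec_min n (R : {set 'I_n.+1}) (c : config n) : Prop :=
  recurrent R c /\ forall c', recurrent R c' -> grains c <= grains c'.

(* Canonical toppling.  canon_cfg c k is the configuration after block k;
   canon_block c k is the k-th block: block 0 = {sink}, odd blocks are the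
   unstable (non-sink) columns, even blocks >= 2 the unstable (non-sink) rows. *)
Definition unstable_in n (R : {set 'I_n.+1}) (c : config n) (col : bool)
  : {set 'I_n.+1} :=
  [set v | [&& v != ord0, (v \notin R) == col & deg R v <= c v]].

Fixpoint canon_cfg n (R : {set 'I_n.+1}) (c : config n) (k : nat) : config n :=
  match k with
  | 0 => topple_sink R c
  | k'.+1 => let d := canon_cfg R c k' in
             topple_set R d (unstable_in R d (odd k))
  end.

Definition canon_block n (R : {set 'I_n.+1}) (c : config n) (k : nat)
  : {set 'I_n.+1} :=
  match k with
  | 0 => [set ord0]
  | k'.+1 => unstable_in R (canon_cfg R c k') (odd k)
  end.

Definition topples_before n (R : {set 'I_n.+1}) (c : config n) (a b : 'I_n.+1)
  : Prop :=
  exists k, a \in canon_block R c k /\ forall k', k' <= k -> b \notin canon_block R c k'.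

(* 0/1-fillings of F: only the values on cells of F are meaningful. *)
Definition filling n := 'I_n.+1 -> 'I_n.+1 -> bool.

Definition EWtab n (R : {set 'I_n.+1}) (T : filling n) : Prop :=
  [/\ (forall j, cell R ord0 j -> T ord0 j),
      (forall i, i \in R -> i != ord0 -> exists2 j, cell R i j & ~~ T i j) &
      (forall i1 i2 j1 j2 : 'I_n.+1, i1 < i2 -> j1 < j2 ->
         cell R i1 j1 -> cell R i1 j2 -> cell R i2 j1 -> cell R i2 j2 ->
         ~ ([&& ~~ T i1 j1, ~~ T i2 j2, T i1 j2 & T i2 j1] ||
            [&& ~~ T i1 j2, ~~ T i2 j1, T i1 j1 & T i2 j2]))].

Definition phi_TC n (R : {set 'I_n.+1}) (T : filling n) : config n :=
  [ffun v => if v == ord0 then 0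
             else if v \in R then #|[set j | cell R v j && T v j]|
             else #|[set i | cell R i v && ~~ T i v]|].

Definition phi_CT n (R : {set 'I_n.+1}) (c : config n) : filling n :=
  fun i j => `[< topples_before R c i j >].

From Stdlib Require Import Relations.
From mathcomp Require Import all_boot.
From mathcomp Require Import boolp.
From mathcomp Require Import zify.

(* Recurrent configurations have no forbidden subconfiguration: every nonempty
   set S of non-sink vertices contains a vertex with at least as many grains as
   neighbours in S (true for cmax because G(F) is connected, and preserved by
   every move).  For a stable configuration d with this property the canonical
   toppling topples every vertex exactly once and gives d back.  When u topples
   it is unstable after receiving one grain from each earlier neighbour, so
   d u >= late u, the number of neighbours of u toppling after u.  Conversely
   every configuration above late is free of forbidden subconfigurations, so if
   c u > late u then removing a grain at u gives a configuration that is again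
   recurrent (it is reached from c by adding grains, toppling u if u is a row,
   and running the canonical toppling), with fewer grains.  Hence c = late on
   Rec^min.  Read through phi_CT, late u counts the 1s of row u and the 0s of
   column u, so phi_TC (phi_CT c) = c; the EW conditions hold because phi_CT
   compares the toppling times, which differ on adjacent vertices. *)

Set Implicit Arguments.
Unset Strict Implicit.
Unset Printing Implicit Defensive.

Notation reach R := (clos_refl_trans _ (@sp_step _ R)).

Lemma card_setIdU (T : finType) (A B : {set T}) (P : pred T) :
  [disjoint A & B] ->
  #|[set x in A :|: B | P x]| = #|[set x in A | P x]| + #|[set x in B | P x]|.
Proof.
move=> AB; rewrite !setIdE setIUl -cardsUI.
suff -> : A :&: [set x | P x] :&: (B :&: [set x | P x]) = set0 by rewrite cards0 addn0.
by apply/disjoint_setI0/(disjointWl (subsetIl _ _))/(disjointWr (subsetIl _ _)).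
Qed.

Section Graph.
Variables (n : nat) (R : {set 'I_n.+1}).

Lemma adjC u v : adj R u v = adj R v u.
Proof. by rewrite /adj orbC. Qed.

Lemma adjnn u : adj R u u = false.
Proof. by rewrite /adj /cell ltnn !andbF. Qed.

Lemma adj_bipartite u v : adj R u v -> (u \in R) = (v \notin R).
Proof.
by case/orP => /and3P[uR vR _]; [rewrite uR vR | rewrite (negbTE vR) uR].
Qed.

Lemma adj0E : ferrers R -> forall v, adj R ord0 v = (v \notin R).
Proof.
case/andP=> R0 _ v; rewrite /adj /cell R0 /= andbF orbF.
case: (boolP (v \in R)) => //= vR; rewrite lt0n.
by apply: contraNneq vR => v0; rewrite (_ : v = ord0) //; apply: val_inj.
Qed.

Lemma adj_ord_max : ferrers R -> forall v, v \in R -> adj R v ord_max.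
Proof.
case/andP=> _ maxR v vR; rewrite /adj /cell vR maxR /=.
have : v != ord_max by apply: contraTneq vR => ->.
rewrite -val_eqE /= => v_max.
by rewrite ltn_neqAle v_max /= -ltnS ltn_ord.
Qed.

Lemma deg_cardsID v (A : {set 'I_n.+1}) :
  deg R v = #|[set u in A | adj R v u]| + #|[set u in ~: A | adj R v u]|.
Proof.
rewrite /deg -(cardsID A [set u | adj R v u]); congr (_ + _); apply: eq_card => u;
by rewrite !inE andbC.
Qed.

Lemma card_adj_le_deg (A : {set 'I_n.+1}) u : #|[set w in A | adj R w u]| <= deg R u.
Proof. by apply/subset_leq_card/subsetP => w; rewrite !inE adjC => /andP[]. Qed.

End Graph.

Section Reach.
Variables (n : nat) (R : {set 'I_n.+1}).

Lemma topple_set0 (X : config n) : topple_set R X set0 = X.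
Proof.
apply/ffunP => u; rewrite ffunE in_set0 subn0; case: ifP => // _.
by rewrite (_ : [set w in set0 | _] = set0) ?cards0 ?addn0 //; apply/setP => w; rewrite !inE.
Qed.

Lemma topple_setD1 (X : config n) (B : {set 'I_n.+1}) w :
  {in B &, forall u v, adj R u v = false} -> w \in B ->
  topple_set R X B = topple_set R (topple R X w) (B :\ w).
Proof.
move=> Bind wB; apply/ffunP => u; rewrite !ffunE; case: ifP => // u0.
rewrite (cardsD1 w [set v in B | adj R v u]) inE wB /=.
have -> : [set v in B | adj R v u] :\ w = [set v in B :\ w | adj R v u].
  by apply/setP => v; rewrite !inE andbA.
rewrite !inE; case: (eqVneq u w) => [->|uw] /=; last by rewrite addnA.
rewrite adjnn wB add0n.
have -> : [set v in B :\ w | adj R v w] = set0.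
  by apply/setP => v; rewrite !inE; case: (boolP (v \in B)) => vB; rewrite ?andbF // (Bind v w) ?andbF.
by rewrite cards0 !addn0 subn0.
Qed.

Lemma reach_topple_set (X : config n) (B : {set 'I_n.+1}) :
  ord0 \notin B -> {in B &, forall u v, adj R u v = false} ->
  {in B, forall w, deg R w <= X w} -> reach R X (topple_set R X B).
Proof.
move card_B: #|B| => m; elim: m B X card_B => [|m IH] B X card_B B0 Bind Bunst.
  by move/eqP: card_B; rewrite cards_eq0 => /eqP ->; rewrite topple_set0; apply: rt_refl.
have /card_gt0P[w wB] : 0 < #|B| by rewrite card_B.
have w0 : w != ord0 by apply: contraNneq B0 => <-.
apply: (@rt_trans _ _ _ (topple R X w)).
  by apply: rt_step; right; exists w; split => //; apply: Bunst.
rewrite (topple_setD1 X Bind wB); apply: IH.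
- by move: card_B; rewrite (cardsD1 w B) wB add1n => -[].
- by rewrite !inE negb_and B0 orbT.
- by move=> u v /setD1P[_ uB] /setD1P[_ vB]; apply: Bind.
- move=> u /setD1P[uw uB]; rewrite ffunE (negbTE uw) (Bind w u wB uB) addn0.
  by case: ifP => _; apply: Bunst.
Qed.

Lemma reach_add_grains (d d' : config n) :
  d ord0 = d' ord0 -> (forall w, d w <= d' w) -> reach R d d'.
Proof.
move gap: (\sum_w (d' w - d w)) => m; elim: m d gap => [|m IH] d gap d0 le_dd'.
  have -> : d = d'; last exact: rt_refl.
  apply/ffunP => w; apply/eqP; rewrite eqn_leq le_dd' /=.
  by move: gap; rewrite (bigD1 w) //= => /eqP; rewrite addn_eq0 subn_eq0 => /andP[].
have [w lt_w|] := pickP (fun w => d w < d' w); last first.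
  by move=> eq_dd'; move: gap; rewrite big1 // => w _; apply/eqP; rewrite subn_eq0 leqNgt eq_dd'.
have w0 : w != ord0 by apply: contraTneq lt_w => ->; rewrite d0 ltnn.
apply: (@rt_trans _ _ _ (add_grain d w)); first by apply: rt_step; left; exists w.
apply: IH.
- rewrite (bigD1 w) //= ffunE eqxx addn1.
  move: gap; rewrite (bigD1 w) //= -(subnSK lt_w) addSn => -[<-]; congr (_ + _).
  by apply: eq_bigr => u uw; rewrite ffunE (negbTE uw) addn0.
- by rewrite ffunE eq_sym (negbTE w0) addn0.
- by move=> u; rewrite ffunE; case: eqVneq => [->|_]; rewrite ?addn1 ?addn0.
Qed.

End Reach.

Definition fsc_free n (R : {set 'I_n.+1}) (d : config n) :=
  forall S : {set 'I_n.+1}, ord0 \notin S -> S != set0 ->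
    exists2 v, v \in S & #|[set u in S | adj R v u]| <= d v.

Section Recurrent.
Variables (n : nat) (R : {set 'I_n.+1}).

Lemma reach_invariant (P : config n -> Prop) :
  (forall d d', sp_step R d d' -> P d -> P d') ->
  forall d d', reach R d d' -> P d -> P d'.
Proof. by move=> Pstep d d'; elim=> [x y /Pstep|x|x y z _ Pxy _ Pyz] // /Pxy. Qed.

Lemma sp_step_sink (d d' : config n) : sp_step R d d' -> d' ord0 = d ord0.
Proof.
case=> [[v v0 ->]|[v [_ _ ->]]]; rewrite ffunE ?eqxx //.
by rewrite eq_sym (negbTE v0) addn0.
Qed.

Lemma fsc_free_add_grain (d : config n) v : fsc_free R d -> fsc_free R (add_grain d v).
Proof.
move=> d_fsc S S0 S_nz; have [u uS le_u] := d_fsc S S0 S_nz.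
by exists u => //; rewrite ffunE; apply: leq_trans le_u (leq_addr _ _).
Qed.

Lemma fsc_free_topple (d : config n) w :
  w != ord0 -> fsc_free R d -> fsc_free R (topple R d w).
Proof.
move=> w0 d_fsc S S0 S_nz.
have S_nz0 x : x \in S -> x != ord0 by move=> xS; apply: contraNneq S0 => <-.
case: (boolP (w \in S)) => wS; last first.
  have [u uS le_u] := d_fsc S S0 S_nz; exists u => //.
  have uw : u != w by apply: contraNneq wS => <-.
  by rewrite ffunE (negbTE (S_nz0 u uS)) (negbTE uw); apply: leq_trans le_u (leq_addr _ _).
have [Sw|Sw_nz] := eqVneq (S :\ w) set0.
  exists w => //; rewrite (_ : [set u in S | adj R w u] = set0) ?cards0 //.
  apply/setP => x; rewrite !inE; case: (eqVneq x w) => [->|xw]; first by rewrite adjnn andbF.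
  by case: (boolP (x \in S)) => xS //; have := in_set0 x; rewrite -Sw !inE xw xS.
have [|u /setD1P[uw uS] le_u] := d_fsc (S :\ w) _ Sw_nz; first by rewrite !inE negb_and S0 orbT.
exists u => //; rewrite ffunE (negbTE (S_nz0 u uS)) (negbTE uw).
rewrite (cardsD1 w [set v in S | adj R u v]) !inE wS /= adjC.
have -> : [set v in S | adj R u v] :\ w = [set v in S :\ w | adj R u v].
  by apply/setP => x; rewrite !inE andbA.
by rewrite addnC leq_add2r.
Qed.

Lemma fsc_free_cmax : ferrers R -> fsc_free R (cmax R).
Proof.
move=> Fer S S0 S_nz.
suff [v vS [x xS vx]] : exists2 v, v \in S & exists2 x, x \notin S & adj R v x.
  have v0 : v != ord0 by apply: contraNneq S0 => <-.
  exists v => //; rewrite ffunE (negbTE v0) (deg_cardsID R v S).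
  have : 0 < #|[set u in ~: S | adj R v u]| by apply/card_gt0P; exists x; rewrite !inE xS.
  lia.
have [v /andP[vS vR]|S_rows] := pickP (fun v => (v \in S) && (v \notin R)).
  by exists v => //; exists ord0; rewrite // adjC adj0E.
have /set0Pn[v vS] := S_nz; have vR : v \in R by have := S_rows v; rewrite vS => /negbFE.
exists v => //; exists ord_max; last exact: adj_ord_max.
by apply: contraNN (proj2 (andP Fer)) => maxS; have := S_rows ord_max; rewrite maxS => /negbFE.
Qed.

Lemma recurrent_sink0 (c : config n) : recurrent R c -> c ord0 = 0.
Proof.
case=> _ reach_c; rewrite (reach_invariant (P := fun d => d ord0 = 0) _ reach_c) //.
  by move=> d d' /sp_step_sink ->.
by rewrite ffunE eqxx.
Qed.

Lemma recurrent_fsc_free (c : config n) : ferrers R -> recurrent R c -> fsc_free R c.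
Proof.
move=> Fer [_ reach_c]; apply: (reach_invariant _ reach_c) (fsc_free_cmax Fer).
by move=> d d' [[v _ ->]|[v [v0 _ ->]]]; [apply: fsc_free_add_grain | apply: fsc_free_topple].
Qed.

End Recurrent.

Section CanonicalToppling.
Variables (n : nat) (R : {set 'I_n.+1}) (d : config n).
Local Notation blk := (canon_block R d).
Local Notation cfg := (canon_cfg R d).

Lemma canon_cfg_sink k : cfg k ord0 = d ord0.
Proof. by elim: k => [|k IH] /=; rewrite ffunE eqxx. Qed.

Lemma canon_block_indep k : {in blk k &, forall u w, adj R u w = false}.
Proof.
case: k => [|k] u w /=; first by rewrite !inE => /eqP -> /eqP ->; apply: adjnn.
rewrite !inE => /and3P[_ /eqP uk _] /and3P[_ /eqP wk _].
have : (u \notin R) = (w \notin R) by rewrite uk wk.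
by case uw: (adj R u w) => //; move: (adj_bipartite uw); case: (u \in R); case: (w \in R).
Qed.

Lemma canon_block_nonsink k u : u \in blk k.+1 -> u != ord0.
Proof. by rewrite inE => /and3P[]. Qed.

Lemma canon_block_unstable k u : u \in blk k.+1 -> deg R u <= cfg k u.
Proof. by rewrite inE => /and3P[]. Qed.

Lemma canon_cfgS k : cfg k.+1 = topple_set R (cfg k) (blk k.+1).
Proof. by []. Qed.

Lemma reach_canon_cfg k : reach R (topple_sink R d) (cfg k).
Proof.
elim: k => [|k IH]; first exact: rt_refl.
apply: rt_trans IH (reach_topple_set _ _ _).
- by rewrite inE eqxx.
- exact: (@canon_block_indep k.+1).
- by move=> w; apply: canon_block_unstable.
Qed.

Definition toppled k := [set u | [exists j : 'I_k.+1, u \in blk j]].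

Lemma toppledP u k : reflect (exists2 j, j <= k & u \in blk j) (u \in toppled k).
Proof.
rewrite inE; apply: (iffP existsP) => [[j uj]|[j le_jk uj]].
  by exists j; rewrite // -ltnS.
by exists (Ordinal (le_jk : j < k.+1)).
Qed.

Lemma toppled0 : toppled 0 = [set ord0].
Proof.
apply/setP => u; apply/toppledP/idP => [[j]|u0]; last by exists 0.
by rewrite leqn0 => /eqP ->.
Qed.

Lemma toppled_sink k : ord0 \in toppled k.
Proof. by apply/toppledP; exists 0; rewrite //= inE. Qed.

Lemma toppledS k : toppled k.+1 = toppled k :|: blk k.+1.
Proof.
apply/setP => u; rewrite in_setU.
apply/toppledP/orP => [[j]|[/toppledP[j le_jk uj]|uk]].
- by rewrite leq_eqVlt => /predU1P[-> | /[swap] uj]; [right | left; apply/toppledP; exists j].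
- by exists j; rewrite // leqW.
- by exists k.+1.
Qed.

Lemma toppled_subset k k' : k <= k' -> toppled k \subset toppled k'.
Proof.
move=> le_kk'; apply/subsetP => u /toppledP[j le_jk uj].
by apply/toppledP; exists j; rewrite // (leq_trans le_jk).
Qed.

Lemma canon_unstable_toppled k (v : 'I_n.+1) :
  v != ord0 -> deg R v <= cfg k v -> v \in toppled k.+2.
Proof.
move=> v0 unst_v; rewrite !toppledS !in_setU.
apply/orP; case: (boolP (v \in blk k.+1)) => vk; [by left; apply/orP; right | right].
rewrite inE canon_cfgS ffunE (negbTE v0) (negbTE vk) subn0 (leq_trans unst_v (leq_addr _ _)).
move: vk; rewrite inE v0 unst_v /= !andbT.
by case: (v \in R); case: (odd k).
Qed.

(* Grain conservation along the canonical toppling; the sink counts as toppled. *)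
Definition canon_balance k := forall u, u != ord0 ->
  cfg k u + (u \in toppled k) * deg R u = d u + #|[set w in toppled k | adj R w u]|.

Hypothesis d_stable : stable R d.

Lemma canon_block_fresh k u :
  canon_balance k -> u \in blk k.+1 -> u \notin toppled k.
Proof.
move=> bal uk; have u0 := canon_block_nonsink uk; apply/negP => ut.
have := bal u u0; rewrite ut mul1n.
have := canon_block_unstable uk; have := d_stable u0; have := card_adj_le_deg R (toppled k) u.
lia.
Qed.

Lemma canon_balance0 : canon_balance 0.
Proof.
move=> u u0; rewrite /= ffunE (negbTE u0) toppled0 inE (negbTE u0) addn0; congr (_ + _).
rewrite (_ : [set w in [set ord0] | adj R w u] = if adj R ord0 u then [set ord0] else set0).
  by case: (adj R ord0 u); rewrite ?cards1 ?cards0.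
apply/setP => w; rewrite !inE.
by case: (eqVneq w ord0) => [->|w0]; case: (adj R ord0 u); rewrite ?inE ?eqxx ?(negbTE w0).
Qed.

Lemma canon_balanceS k : canon_balance k -> canon_balance k.+1.
Proof.
move=> bal u u0.
have fresh : [disjoint toppled k & blk k.+1].
  by rewrite disjoint_sym disjoint_subset; apply/subsetP => x; apply: canon_block_fresh.
rewrite toppledS card_setIdU // in_setU canon_cfgS ffunE (negbTE u0).
move: (bal u u0); case: (boolP (u \in blk k.+1)) => uk; last first.
  by rewrite orbF subn0; case: (u \in toppled k); lia.
rewrite (negbTE (canon_block_fresh bal uk)) mul0n addn0 mul1n => balu.
have -> : [set w in blk k.+1 | adj R w u] = set0.
  apply/setP => w; rewrite in_set0; apply/negbTE/negP => /setIdP[wk wu].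
  by rewrite (canon_block_indep wk uk) in wu.
rewrite cards0 !addn0 subnK //; exact: canon_block_unstable uk.
Qed.

Lemma canon_balance_all k : canon_balance k.
Proof. by elim: k => [|k]; [apply: canon_balance0 | apply: canon_balanceS]. Qed.

End CanonicalToppling.

Section TopplingTime.
Variables (n : nat) (R : {set 'I_n.+1}) (d : config n).
Hypothesis d_stable : stable R d.
Hypothesis d_fsc : fsc_free R d.
Local Notation blk := (canon_block R d).
Local Notation cfg := (canon_cfg R d).
Local Notation toppled := (toppled R d).

Lemma toppled_grows k : toppled k != setT -> #|toppled k| < #|toppled k.+2|.
Proof.
move=> not_full.
(* The vertex given by [d_fsc] for the untoppled set is unstable after block [k]. *)
have [||v] := d_fsc (S := ~: toppled k).
- by rewrite inE negbK toppled_sink.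
- by apply: contra not_full => /eqP empty; rewrite -[toppled k]setCK empty setC0.
rewrite inE => vk le_v.
have v0 : v != ord0 by apply: contraNneq vk => ->; apply: toppled_sink.
have unst_v : deg R v <= cfg k v.
  have := canon_balance_all d_stable k v0; rewrite (negbTE vk) mul0n addn0 => ->.
  rewrite (deg_cardsID R v (toppled k)) addnC.
  by rewrite leq_add //; apply/eq_leq/eq_card => w; rewrite !inE adjC.
apply: proper_card; apply/properP; split; first by apply: toppled_subset; lia.
by exists v => //; apply: canon_unstable_toppled.
Qed.

Lemma toppled_full : toppled (n.+1).*2 = setT.
Proof.
suff /(_ n.+1)[//|] : forall m, toppled m.*2 = setT \/ m < #|toppled m.*2|.
  by move=> lt_n; have := max_card (mem (toppled (n.+1).*2)); rewrite card_ord leqNgt lt_n.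
have grow m : toppled m.*2 \subset toppled m.+1.*2 by apply: toppled_subset; rewrite doubleS; lia.
elim=> [|m IH]; first by right; apply/card_gt0P; exists ord0; apply: toppled_sink.
have [full|not_full] := eqVneq (toppled m.*2) setT.
  by left; apply/eqP; rewrite eqEsubset subsetT -full grow.
case: IH => [full|lt_m]; first by rewrite full eqxx in not_full.
by right; rewrite doubleS; apply: leq_trans (toppled_grows not_full).
Qed.

(* The range is large enough by [toppled_full], so [find] never falls off its end. *)
Definition ttime u := find (fun k => u \in blk k) (iota 0 (n.+1).*2.+1).

Lemma ttimeP u : u \in blk (ttime u).
Proof.
have /toppledP[k le_k uk] : u \in toppled (n.+1).*2 by rewrite toppled_full inE.
have has_k : has (fun k => u \in blk k) (iota 0 (n.+1).*2.+1).
  by apply/hasP; exists k; rewrite // mem_iota ltnS le_k.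
have lt_t : ttime u < (n.+1).*2.+1 by rewrite -[X in _ < X](size_iota 0) -has_find.
by move: (nth_find 0 has_k); rewrite nth_iota.
Qed.

Lemma canon_block_uniq u k1 k2 : u \in blk k1 -> u \in blk k2 -> k1 = k2.
Proof.
wlog le_k : k1 k2 / k1 <= k2.
  by move=> W u1 u2; case: (leqP k1 k2) => [|/ltnW] le_k; [apply: W | apply/esym/W].
move=> u1; case: k2 le_k => [|k]; first by rewrite leqn0 => /eqP.
rewrite leq_eqVlt => /predU1P[// | lt_k] u2.
have /negP[] := canon_block_fresh d_stable (canon_balance_all d_stable k) u2.
by apply/toppledP; exists k1.
Qed.

Lemma canon_blockE u k : (u \in blk k) = (ttime u == k).
Proof.
by apply/idP/eqP => [uk|<-]; [apply: canon_block_uniq (ttimeP u) uk | apply: ttimeP].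
Qed.

Lemma toppledE u k : (u \in toppled k) = (ttime u <= k).
Proof.
apply/toppledP/idP => [[j le_jk]|le_k]; first by rewrite canon_blockE => /eqP ->.
by exists (ttime u) => //; apply: ttimeP.
Qed.

Lemma ttime_sink : ttime ord0 = 0.
Proof. by apply/eqP; rewrite -canon_blockE inE. Qed.

Lemma ttime_gt0 u : u != ord0 -> 0 < ttime u.
Proof.
move=> u0; rewrite lt0n; apply: contraNneq u0 => t0.
by have := ttimeP u; rewrite t0 inE.
Qed.

Lemma adj_ttime u w : adj R u w -> ttime u != ttime w.
Proof.
move=> uw; apply: contraTneq uw => tuw.
by rewrite (canon_block_indep (ttimeP u)) // tuw ttimeP.
Qed.

Lemma ttime_unstable u :
  u != ord0 -> deg R u <= d u + #|[set w | adj R w u & ttime w < ttime u]|.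
Proof.
move=> u0; have := ttime_gt0 u0; case tu: (ttime u) => [//|k] _.
have uk : u \in blk k.+1 by rewrite -tu ttimeP.
have := canon_balance_all d_stable k u0; rewrite toppledE tu ltnn mul0n addn0.
rewrite (eq_card (B := [set w in toppled k | adj R w u])) => [<-|w].
  exact: canon_block_unstable uk.
apply/setIdP/setIdP => -[h1 h2]; split => //; first by rewrite toppledE -ltnS.
by rewrite ltnS -toppledE.
Qed.

Lemma canon_cfg_full : cfg (n.+1).*2 = d.
Proof.
apply/ffunP => u; have [->|u0] := eqVneq u ord0; first exact: canon_cfg_sink.
have := canon_balance_all d_stable (n.+1).*2 u0; rewrite toppled_full in_setT mul1n.
rewrite (eq_card (B := [set w | adj R u w])) => [/addIn //|w].
by rewrite !inE adjC.
Qed.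

Lemma topples_beforeE u w : topples_before R d u w <-> ttime u < ttime w.
Proof.
split=> [[k [uk wk]]|lt_uw].
  move: uk; rewrite canon_blockE => /eqP tu; rewrite ltnNge; apply/negP => le_wu.
  by move: (wk _ (leq_trans le_wu (eq_leq tu))); rewrite ttimeP.
exists (ttime u); split=> [|k le_k]; first exact: ttimeP.
by rewrite canon_blockE; apply: contraTneq le_k => <-; rewrite -ltnNge.
Qed.

End TopplingTime.

Lemma reach_burning n (R : {set 'I_n.+1}) (d : config n) :
  stable R d -> fsc_free R d -> reach R (topple_sink R d) d.
Proof.
by move=> d_stable d_fsc; rewrite -{2}(canon_cfg_full d_stable d_fsc); apply: reach_canon_cfg.
Qed.

Section Late.
Variables (n : nat) (R : {set 'I_n.+1}) (d : config n).
Local Notation t := (ttime R d).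

Definition late u := #|[set w | adj R u w & t u < t w]|.

Hypothesis d_stable : stable R d.
Hypothesis d_fsc : fsc_free R d.

Lemma deg_late u : deg R u = #|[set w | adj R w u & t w < t u]| + late u.
Proof.
rewrite (deg_cardsID R u [set w | t w < t u]); congr (_ + _); apply: eq_card => w.
  by rewrite !inE adjC andbC.
rewrite !inE andbC; case: (boolP (adj R u w)) => //= uw.
by rewrite -leqNgt leq_eqVlt (negbTE (adj_ttime d_stable d_fsc uw)).
Qed.

Lemma late_le u : u != ord0 -> late u <= d u.
Proof.
by move=> u0; have := ttime_unstable d_stable d_fsc u0; rewrite deg_late addnC leq_add2r.
Qed.

Lemma fsc_free_late (c : config n) : (forall u, u != ord0 -> late u <= c u) -> fsc_free R c.
Proof.
move=> le_late S S0 /set0Pn[s sS].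
have [x xS min_x] := arg_minnP t sS; exists x => //.
have x0 : x != ord0 by apply: contraNneq S0 => <-.
apply: leq_trans (le_late x x0); apply/subset_leq_card/subsetP => y.
rewrite !inE => /andP[yS xy]; rewrite xy ltn_neqAle (adj_ttime d_stable d_fsc xy).
exact: min_x.
Qed.

End Late.

Definition sub_grain n (c : config n) (v : 'I_n.+1) : config n :=
  [ffun u => c u - (u == v)].

Lemma grains_sub_grain n (c : config n) v : 0 < c v -> (grains (sub_grain c v)).+1 = grains c.
Proof.
move=> cv; rewrite /grains (bigD1 v) //= [in RHS](bigD1 v) //= ffunE eqxx subn1 -addSn prednK //.
by congr (_ + _); apply: eq_bigr => u uv; rewrite ffunE (negbTE uv) subn0.
Qed.

Section MinimalRecurrent.
Variables (n : nat) (R : {set 'I_n.+1}).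
Hypothesis Fer : ferrers R.

Lemma reach_topple_sink_sub_grain (c : config n) (u : 'I_n.+1) :
  stable R c -> u != ord0 -> 0 < c u -> reach R c (topple_sink R (sub_grain c u)).
Proof.
move=> c_st u0 cu.
have subE w : sub_grain c u w = if w == u then (c u).-1 else c w.
  by rewrite ffunE; case: eqVneq => [->|_] /=; rewrite ?subn1 ?subn0.
have sink0 w : topple_sink R (sub_grain c u) w =
    if w == ord0 then c ord0 else (if w == u then (c u).-1 else c w) + (w \notin R).
  rewrite ffunE subE adj0E //; case: eqVneq => [->|//].
  by rewrite eq_sym (negbTE u0).
case: (boolP (u \in R)) => uR; last first.
  apply: reach_add_grains => [|w]; rewrite sink0 ?eqxx //.
  have [->|_] := eqVneq w ord0; first by [].
  have [->|_] := eqVneq w u; last exact: leq_addr.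
  by rewrite uR addn1 prednK.
pose X : config n := [ffun w => if w == u then (c u).-1 + deg R u
                                else if adj R u w then c w else c w + (w \notin R)].
have X0 : X ord0 = c ord0.
  by rewrite ffunE eq_sym (negbTE u0) -adj0E // adjnn addn0; case: ifP.
apply: (@rt_trans _ _ _ X).
  apply: reach_add_grains => [|w]; first by rewrite X0.
  rewrite ffunE; case: eqVneq => [->|_]; first by have := c_st u u0; lia.
  by case: (adj R u w); rewrite ?leq_addr.
have -> : topple_sink R (sub_grain c u) = topple R X u.
  apply/ffunP => w; rewrite sink0 [RHS]ffunE; case: eqVneq => [->|w0]; first by rewrite X0.
  rewrite ffunE; case: eqVneq => [->|wu]; first by rewrite uR addn0 addnK.
  case: (boolP (adj R u w)) => [uw|_]; last by rewrite addn0.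
  by rewrite -(adj_bipartite uw) uR.
apply: rt_step; right; exists u; split => //.
by rewrite ffunE eqxx leq_addl.
Qed.

Lemma recurrent_sub_grain (c : config n) (u : 'I_n.+1) :
  recurrent R c -> u != ord0 -> late R c u < c u -> recurrent R (sub_grain c u).
Proof.
move=> c_rec u0 lt_u; have [c_st reach_c] := c_rec.
have c_fsc := recurrent_fsc_free Fer c_rec.
have cu : 0 < c u by apply: leq_ltn_trans lt_u.
have subE w : sub_grain c u w = if w == u then (c u).-1 else c w.
  by rewrite ffunE; case: eqVneq => [->|_] /=; rewrite ?subn1 ?subn0.
have sub_st : stable R (sub_grain c u).
  move=> w w0; rewrite subE; case: eqVneq => [->|_]; last exact: c_st.
  by apply: leq_ltn_trans (c_st u u0); apply: leq_pred.
have sub_fsc : fsc_free R (sub_grain c u).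
  apply: (fsc_free_late c_st c_fsc) => w w0; rewrite subE.
  case: eqVneq => [->|_]; [by rewrite -ltnS prednK | exact: late_le].
split=> //; apply: rt_trans reach_c _; apply: rt_trans _ (reach_burning sub_st sub_fsc).
exact: reach_topple_sink_sub_grain.
Qed.

Lemma rec_min_late (c : config n) (u : 'I_n.+1) :
  rec_min R c -> u != ord0 -> c u = late R c u.
Proof.
move=> [c_rec c_min] u0; have c_fsc := recurrent_fsc_free Fer c_rec.
apply/eqP; rewrite eqn_leq (late_le (proj1 c_rec) c_fsc u0) andbT leqNgt; apply/negP => lt_u.
have := c_min _ (recurrent_sub_grain c_rec u0 lt_u).
by rewrite -(grains_sub_grain (leq_ltn_trans (leq0n _) lt_u)) ltnn.
Qed.

End MinimalRecurrent.

Section CanonicalFilling.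
Variables (n : nat) (R : {set 'I_n.+1}) (d : config n).
Hypothesis d_stable : stable R d.
Hypothesis d_fsc : fsc_free R d.
Local Notation t := (ttime R d).

Lemma phi_CTE i j : phi_CT R d i j = (t i < t j).
Proof. by apply/asboolP/idP => /(topples_beforeE d_stable d_fsc). Qed.

Lemma cell_ttime i j : cell R i j -> t i != t j.
Proof. by move=> ij; apply: (adj_ttime d_stable d_fsc); rewrite /adj ij. Qed.

Lemma EWtab_phi_CT : EWtab R (phi_CT R d).
Proof.
split.
- move=> j j_cell; rewrite phi_CTE ttime_sink // ttime_gt0 //.
  by apply: contraTneq j_cell => ->; rewrite /cell ltnn !andbF.
- move=> i iR i0.
  have : 0 < #|[set w | adj R w i & t w < t i]|.
    by have := ttime_unstable d_stable d_fsc i0; have := d_stable i0; lia.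
  case/card_gt0P => w; rewrite inE => /andP[wi lt_wi]; exists w.
    by case/orP: wi => /and3P[] //; rewrite iR.
  by rewrite phi_CTE -leqNgt ltnW.
- move=> i1 i2 j1 j2 _ _ c11 c12 c21 c22; rewrite !phi_CTE.
  move: (cell_ttime c11) (cell_ttime c12) (cell_ttime c21) (cell_ttime c22).
  by move=> /eqP ? /eqP ? /eqP ? /eqP ?; rewrite -!leqNgt; case/orP => /and4P[]; lia.
Qed.

Lemma phi_TC_phi_CT v : v != ord0 -> phi_TC R (phi_CT R d) v = late R d v.
Proof.
move=> v0; rewrite ffunE (negbTE v0) /late; case: (boolP (v \in R)) => vR.
  apply: eq_card => w; rewrite !inE phi_CTE /adj [cell R w v]/cell vR /=.
  by rewrite andbF orbF.
apply: eq_card => w; rewrite !inE phi_CTE /adj [cell R v w]/cell (negbTE vR) /=.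
case: (boolP (cell R w v)) => //= wv.
by rewrite -leqNgt leq_eqVlt eq_sym (negbTE (cell_ttime wv)).
Qed.

End CanonicalFilling.

Theorem proposition3p10 (n : nat) (R : {set 'I_n.+1}) (c : config n) :
  ferrers R -> rec_min R c ->
  EWtab R (phi_CT R c) /\ phi_TC R (phi_CT R c) = c.
Proof.
move=> Fer c_min; have c_rec := proj1 c_min.
have c_st := proj1 c_rec; have c_fsc := recurrent_fsc_free Fer c_rec.
split; first exact: EWtab_phi_CT c_st c_fsc.
apply/ffunP => v; have [->|v0] := eqVneq v ord0.
  by rewrite ffunE eqxx (recurrent_sink0 c_rec).
by rewrite (phi_TC_phi_CT c_st c_fsc v0) -(rec_min_late Fer c_min v0).
Qed.
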